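(* Let $G$ be a compact connected Lie group with identity $e$. Let $N=(N(t))_{t\ge0}$ be a Poisson process with parameter $\lambda>0$, let $(X_n)_{n\ge1}$ be i.i.d. $G$-valued random variables, with the family $(X_n)_{n\ge1}$ independent of $N$, set $X_0=e$, and define the left compound Poisson process $Y(t)=\prod_{n=0}^{N(t)}X_n$ (product ordered from left to right). Then for every $t\ge0$: (1) if $X_1$ is inverse invariant then $Y(t)$ is inverse invariant; (2) if $X_1$ is conjugate invariant then $Y(t)$ is conjugate invariant.
   Context: A $G$-valued random variable $X$ is inverse invariant if $X\stackrel{d}{=}X^{-1}$, and conjugate invariant if $X\stackrel{d}{=}kXk^{-1}$ for all $k\in G$, where $\stackrel{d}{=}$ denotes equality in distribution. *)

From HB Require Import structures.
From mathcomp Require Import all_boot all_order all_algebra.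
From mathcomp Require Import all_classical all_reals all_analysis.
From mathcomp Require Import poisson_distribution.

Set Implicit Arguments.
Unset Strict Implicit.
Unset Printing Implicit Defensive.

Import Order.TTheory GRing.Theory Num.Theory.
Local Open Scope classical_set_scope.
Local Open Scope ring_scope.

Definition borel_of (G : ptopologicalType) := g_sigma_algebraType (@open G).

Section Defs.
Context {R : realType} {d : measure_display} {T : measurableType d}.
Variable P : probability T R.

Definition eq_distr {d'} {S : measurableType d'} (U V : T -> S) : Prop :=
  forall B : set S, measurable B -> P (U @^-1` B) = P (V @^-1` B).

Definition sigma_of {d'} {S : measurableType d'} (U : T -> S) : set (set T) :=
  preimage_set_system setT U measurable.

Definition mutually_independent_pos {d'} {S : measurableType d'}
    (U : nat -> T -> S) : Prop :=
  forall (s : seq nat) (A : nat -> set T),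
    uniq s -> all (fun n => 0 < n)%N s ->
    (forall n, n \in s -> sigma_of (U n) (A n)) ->
    P (\bigcap_(n in [set n | n \in s]) A n) = (\prod_(n <- s) P (A n))%E.

Definition independent_families {d'} {S : measurableType d'}
    (U : nat -> T -> S) (N : R -> T -> nat) : Prop :=
  forall A B : set T,
    <<s \bigcup_(n in [set n | (0 < n)%N]) sigma_of (U n) >> A ->
    <<s \bigcup_(t in [set t | 0 <= t]) sigma_of (N t) >> B ->
    P (A `&` B) = (P A * P B)%E.

Definition poisson_process (lambda : R) (N : R -> T -> nat) : Prop :=
  [/\ (forall t, 0 <= t -> measurable_fun setT (N t)),
      (forall w, N 0 w = 0%N),
      (forall w s t, 0 <= s -> s <= t -> (N s w <= N t w)%N),
      (forall (n : nat) (tt : nat -> R) (C : nat -> set nat),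
          0 <= tt 0%N -> (forall i, (i < n)%N -> tt i < tt i.+1) ->
          P (\bigcap_(i in [set i | (i < n)%N])
                [set w | C i (N (tt i.+1) w - N (tt i) w)%N]) =
          (\prod_(i < n) P [set w | C i (N (tt i.+1) w - N (tt i) w)%N])%E) &
      (forall s t (k : nat), 0 <= s -> s < t ->
          P [set w | (N t w - N s w)%N = k] = (poisson_pmf (lambda * (t - s)) k)%:E)].

End Defs.

Fixpoint cprod {T G : Type} (mul : G -> G -> G) (e : G) (X : nat -> T -> G)
    (n : nat) (w : T) : G :=
  match n with
  | 0%N => e
  | k.+1 => mul (cprod mul e X k w) (X k.+1 w)
  end.

Definition compound_poisson {R : Type} {T G : Type} (mul : G -> G -> G) (e : G)
    (X : nat -> T -> G) (N : R -> T -> nat) (t : R) (w : T) : G :=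
  cprod mul e X (N t w) w.

(* Condition on N(t) = n.  On that event Y(t)^-1 is the ordered product of the
   X_(n+1-i)^-1, and k Y(t) k^-1 the ordered product of the k X_i k^-1; these
   reindexed factors are again mutually independent, distributed like X_1 and
   independent of N.  As {N(t) = n} is independent of the factors,
   P(N(t) = n, X_1 ... X_n \in B) = P(N(t) = n) P(X_1 ... X_n \in B), and the law
   of an ordered product of independent factors only depends on the laws of the
   factors: by induction on n, the joint laws of (X_1 ... X_n, X_(n+1)) agree on
   rectangles, hence everywhere. *)

From HB Require Import structures.
From mathcomp Require Import all_boot all_order all_algebra.
From mathcomp Require Import all_classical all_reals all_analysis.
From mathcomp Require Import zify.
Import Order.TTheory GRing.Theory Num.Theory.
Local Open Scope classical_set_scope.
Local Open Scope ring_scope.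

Set Implicit Arguments.
Unset Strict Implicit.
Unset Printing Implicit Defensive.

Section eq_pushforward_setX.
Local Open Scope ereal_scope.
Context {R : realType} {d1 d2 e1 e2 : measure_display}.
Context {T1 : measurableType d1} {T2 : measurableType d2}.
Context {S1 : measurableType e1} {S2 : measurableType e2}.
Variables (m1 : {measure set T1 -> \bar R}) (m2 : {measure set T2 -> \bar R}).
Variables (h1 : T1 -> S1 * S2) (h2 : T2 -> S1 * S2).
Hypotheses (mh1 : measurable_fun setT h1) (mh2 : measurable_fun setT h2).
Hypothesis m1_fin : m1 setT < +oo.
Hypothesis eq_rect : forall A B, measurable A -> measurable B ->
  m1 (h1 @^-1` (A `*` B)) = m2 (h2 @^-1` (A `*` B)).

Lemma eq_pushforward_setX C : measurable C -> m1 (h1 @^-1` C) = m2 (h2 @^-1` C).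
Proof.
move=> mC.
apply: (measure_unique [set A `*` B | A in @measurable _ S1 & B in @measurable _ S2]
   (fun _ => setT) _ _ _ _ (pushforward m1 h1) (pushforward m2 h2)) => //.
- exact: measurable_prod_measurableType.
- move=> _ _ [A1 mA1 [B1 mB1 <-]] [A2 mA2 [B2 mB2 <-]].
  rewrite -setXI; exists (A1 `&` A2); first exact: measurableI.
  by exists (B1 `&` B2) => //; exact: measurableI.
- by move=> _; exists setT => //; exists setT => //; rewrite setXTT.
- by rewrite bigcup_const.
- by move=> _ [A mA [B mB <-]]; exact: eq_rect.
Qed.
End eq_pushforward_setX.

Section cprod_law.
Local Open Scope ereal_scope.
Context {R : realType} {d : measure_display} {T : measurableType d}.
Variable P : probability T R.
Context {d' : measure_display} {S : measurableType d'}.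
Variables (mul : S -> S -> S) (e : S).
Hypothesis mul_meas : measurable_fun setT (fun p : S * S => mul p.1 p.2).

Local Notation cprod := (cprod mul e).

Definition indep_upto (n : nat) (K : set T) (U : nat -> T -> S) :=
  forall (s : seq nat) (B : nat -> set S),
    uniq s -> all (fun i => 0 < i <= n)%N s -> (forall i, measurable (B i)) ->
    P (K `&` \big[setI/setT]_(i <- s) (U i @^-1` B i)) =
    P K * \prod_(i <- s) P (U i @^-1` B i).

Lemma measurable_cprod (U : nat -> T -> S) :
  (forall i, (0 < i)%N -> measurable_fun setT (U i)) ->
  forall n, measurable_fun setT (cprod U n).
Proof.
move=> mU; elim=> [|n IH] /=; first exact: measurable_cst.
exact: (measurableT_comp mul_meas (measurable_fun_pair IH (mU n.+1 isT))).
Qed.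

Lemma indep_upto_preimage n K (U : nat -> T -> S) A :
  indep_upto n.+1 K U -> measurable A ->
  P (K `&` U n.+1 @^-1` A) = P K * P (U n.+1 @^-1` A).
Proof.
move=> iK mA; have := iK [:: n.+1] (fun=> A) isT.
by rewrite !big_seq1 /= ltnSn; apply.
Qed.

Lemma indep_uptoSI n K (U : nat -> T -> S) A :
  measurable A -> indep_upto n.+1 K U ->
  indep_upto n (K `&` U n.+1 @^-1` A) U.
Proof.
move=> mA iK s B us sn mB.
pose B' i := if i == n.+1 then A else B i.
have mB' i : measurable (B' i) by rewrite /B'; case: ifP.
have sB' : {in s, B' =1 B}.
  by move=> i /(allP sn) /andP[_ le_in]; rewrite /B' ltn_eqF.
have n1s : n.+1 \notin s by apply/negP => /(allP sn) /andP[_]; rewrite ltnn.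
have sn1 : all (fun i => 0 < i <= n.+1)%N (n.+1 :: s).
  by rewrite /= ltnSn; apply: sub_all sn => i /andP[-> /leqW].
have := iK (n.+1 :: s) B' _ sn1 mB'; rewrite /= n1s us => /(_ isT).
rewrite !big_cons [B' n.+1]/B' eqxx.
rewrite (eq_big_seq (fun i => U i @^-1` B i)); last by move=> i /sB' ->.
rewrite (eq_big_seq (fun i => P (U i @^-1` B i))); last by move=> i /sB' ->.
by rewrite setIA (indep_upto_preimage iK mA) muleA.
Qed.

Section independent_factors.
Variable U : nat -> T -> S.
Hypothesis mU : forall i, (0 < i)%N -> measurable_fun setT (U i).
Hypothesis iU : forall n, indep_upto n setT U.

Lemma indep_upto_cprod n K A : measurable K -> indep_upto n K U -> measurable A ->
  P (K `&` cprod U n @^-1` A) = P K * P (cprod U n @^-1` A).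
Proof.
elim: n K A => [|n IH] K A mK iK mA.
  have [Ae|nAe] := pselect (A e).
    have -> : cprod U 0 @^-1` A = setT by apply/seteqP; split.
    by rewrite setIT probability_setT mule1.
  have -> : cprod U 0 @^-1` A = set0 by apply/seteqP; split.
  by rewrite setI0 measure0 mule0.
pose h w := (cprod U n w, U n.+1 w).
have mh : measurable_fun setT h.
  exact: measurable_fun_pair (measurable_cprod mU n) (mU (ltn0Sn n)).
have mUn1 A2 : measurable A2 -> measurable (U n.+1 @^-1` A2).
  by move=> mA2; rewrite -[X in measurable X]setTI; exact: mU.
have PK_ge0 : (0 <= fine (P K))%R by rewrite fine_ge0.
(* Both measures agree on rectangles by the induction hypothesis for the events
   K `&` {U n.+1 \in A2} and {U n.+1 \in A2}. *)
have rect A1 A2 : measurable A1 -> measurable A2 ->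
    mrestr P mK (h @^-1` (A1 `*` A2)) =
    mscale (NngNum PK_ge0) P (h @^-1` (A1 `*` A2)).
  move=> mA1 mA2; rewrite /mrestr /mscale /= fineK ?fin_num_measure//.
  have -> : h @^-1` (A1 `*` A2) = U n.+1 @^-1` A2 `&` cprod U n @^-1` A1.
    by apply/seteqP; split=> w [].
  have iKA2 : indep_upto n (K `&` U n.+1 @^-1` A2) U := indep_uptoSI mA2 iK.
  have iA2 : indep_upto n (U n.+1 @^-1` A2) U.
    by rewrite -[_ @^-1` A2]setTI; exact: indep_uptoSI.
  rewrite setIC setIA (IH _ _ (measurableI _ _ mK (mUn1 _ mA2)) iKA2 mA1).
  rewrite (IH _ _ (mUn1 _ mA2) iA2 mA1) (indep_upto_preimage iK mA2).
  by rewrite muleA.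
have mulA_meas : measurable ((fun p : S * S => mul p.1 p.2) @^-1` A).
  by rewrite -[X in measurable X]setTI; exact: mul_meas.
have mrestr_fin : mrestr P mK setT < +oo.
  by rewrite /mrestr setTI (le_lt_trans (probability_le1 _ mK)) ?ltry.
have := eq_pushforward_setX mh mh mrestr_fin rect mulA_meas.
rewrite /= /mrestr /mscale fineK ?fin_num_measure// => eqC.
by rewrite setIC; exact: eqC.
Qed.

Lemma cprod_preimage_indep n A1 A2 : measurable A1 -> measurable A2 ->
  P (cprod U n @^-1` A1 `&` U n.+1 @^-1` A2) =
  P (cprod U n @^-1` A1) * P (U n.+1 @^-1` A2).
Proof.
move=> mA1 mA2; have mUA2 : measurable (U n.+1 @^-1` A2).
  by rewrite -[X in measurable X]setTI; exact: mU.
rewrite setIC indep_upto_cprod //; last first.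
  by rewrite -[_ @^-1` A2]setTI; exact: indep_uptoSI.
by rewrite muleC.
Qed.
End independent_factors.

Lemma eq_distr_cprod (U V : nat -> T -> S) :
  (forall i, (0 < i)%N -> measurable_fun setT (U i)) ->
  (forall i, (0 < i)%N -> measurable_fun setT (V i)) ->
  (forall n, indep_upto n setT U) -> (forall n, indep_upto n setT V) ->
  (forall i, (0 < i)%N -> eq_distr P (U i) (V i)) ->
  forall n, eq_distr P (cprod U n) (cprod V n).
Proof.
move=> mU mV iU iV UV; elim=> [//|n IH] A mA.
pose hU w := (cprod U n w, U n.+1 w); pose hV w := (cprod V n w, V n.+1 w).
have mhU : measurable_fun setT hU.
  exact: measurable_fun_pair (measurable_cprod mU n) (mU n.+1 isT).
have mhV : measurable_fun setT hV.
  exact: measurable_fun_pair (measurable_cprod mV n) (mV n.+1 isT).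
have rect A1 A2 : measurable A1 -> measurable A2 ->
    P (hU @^-1` (A1 `*` A2)) = P (hV @^-1` (A1 `*` A2)).
  move=> mA1 mA2.
  rewrite [LHS](cprod_preimage_indep mU iU) // [RHS](cprod_preimage_indep mV iV) //.
  by rewrite IH // UV.
have mulA_meas : measurable ((fun p : S * S => mul p.1 p.2) @^-1` A).
  by rewrite -[X in measurable X]setTI; exact: mul_meas.
have P_fin : P setT < +oo by rewrite probability_setT ltry.
exact: (eq_pushforward_setX mhU mhV P_fin rect mulA_meas).
Qed.
End cprod_law.

Section random_index.
Local Open Scope ereal_scope.
Context {R : realType} {d : measure_display} {T : measurableType d}.
Variable P : probability T R.
Context {d' : measure_display} {S : measurableType d'}.
Variable N : T -> nat.
Hypothesis mN : measurable_fun setT N.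

Lemma measurable_eq_index n : measurable [set w | N w = n].
Proof.
change (measurable (N @^-1` [set n])).
by rewrite -[X in measurable X]setTI; exact: mN.
Qed.

Lemma measure_random_index (g : nat -> T -> S) B :
  (forall n, measurable_fun setT (g n)) -> measurable B ->
  P ((fun w => g (N w) w) @^-1` B) =
  \sum_(n <oo) P ([set w | N w = n] `&` g n @^-1` B).
Proof.
move=> mg mB.
have -> : (fun w => g (N w) w) @^-1` B =
    \bigcup_(n in setT) ([set w | N w = n] `&` g n @^-1` B).
  by apply/seteqP; split=> [w gw|w [n _ [/= <-]]] //; exists (N w).
rewrite measure_bigcup; first by apply: eq_eseriesl => n; rewrite in_setT.
  move=> n _; apply: measurableI; first exact: measurable_eq_index.
  by rewrite -[X in measurable X]setTI; exact: mg.
apply/trivIsetP => i j _ _ /eqP ij.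
apply/seteqP; split=> // w [[/= Ni _] [/= Nj _]].
by apply: ij; rewrite -Ni -Nj.
Qed.

Variables (mul : S -> S -> S) (e : S).
Hypothesis mul_meas : measurable_fun setT (fun p : S * S => mul p.1 p.2).

Lemma eq_distr_cprod_random_index (U V : nat -> nat -> T -> S) :
  (forall n i, (0 < i)%N -> measurable_fun setT (U n i)) ->
  (forall n i, (0 < i)%N -> measurable_fun setT (V n i)) ->
  (forall n k, indep_upto P k setT (U n)) ->
  (forall n k, indep_upto P k setT (V n)) ->
  (forall n, indep_upto P n [set w | N w = n] (U n)) ->
  (forall n, indep_upto P n [set w | N w = n] (V n)) ->
  (forall n i, (0 < i)%N -> eq_distr P (U n i) (V n i)) ->
  eq_distr P (fun w => cprod mul e (U (N w)) (N w) w)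
             (fun w => cprod mul e (V (N w)) (N w) w).
Proof.
move=> mU mV iU iV iNU iNV UV B mB.
rewrite (measure_random_index (fun n => measurable_cprod e mul_meas (mU n) n) mB).
rewrite (measure_random_index (fun n => measurable_cprod e mul_meas (mV n) n) mB).
apply: eq_eseriesr => n _ /=.
have [mNn cprodUV] := (measurable_eq_index n,
  eq_distr_cprod e mul_meas (mU n) (mV n) (iU n) (iV n) (UV n) n mB).
rewrite (indep_upto_cprod e mul_meas (mU n) (iU n) mNn (iNU n) mB).
by rewrite (indep_upto_cprod e mul_meas (mV n) (iV n) mNn (iNV n) mB) cprodUV.
Qed.
End random_index.

Section reindexed_family.
Local Open Scope ereal_scope.
Context {R : realType} {d : measure_display} {T : measurableType d}.
Variable P : probability T R.
Context {d' : measure_display} {S : measurableType d'}.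
Variable X : nat -> T -> S.
Hypothesis mX : forall n, (0 < n)%N -> measurable_fun setT (X n).
Hypothesis iX : mutually_independent_pos P X.
Variables (sg : nat -> nat) (f : S -> S).
Hypothesis sg_gt0 : forall i, (0 < i)%N -> (0 < sg i)%N.
Hypothesis sgK : forall i, (0 < i)%N -> sg (sg i) = i.
Hypothesis mf : measurable_fun setT f.

Let W i w := f (X (sg i) w).

Let measurable_preimage_f A : measurable A -> measurable (f @^-1` A).
Proof. by move=> mA; rewrite -[X in measurable X]setTI; exact: mf. Qed.

Lemma measurable_reindexed i : (0 < i)%N -> measurable_fun setT (W i).
Proof. by move=> i_gt0; exact: measurableT_comp mf (mX (sg_gt0 i_gt0)). Qed.

Lemma reindexed_prod (s : seq nat) (B : nat -> set S) :
  uniq s -> all (fun i => 0 < i)%N s -> (forall i, measurable (B i)) ->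
  P (\big[setI/setT]_(i <- s) (W i @^-1` B i)) =
  \prod_(i <- s) P (W i @^-1` B i).
Proof.
move=> us s_gt0 mB.
have sgs_gt0 : all (fun i => 0 < i)%N (map sg s).
  by rewrite all_map; apply: sub_all s_gt0 => i /sg_gt0.
have sgs_uniq : uniq (map sg s).
  rewrite map_inj_in_uniq // => i j /(allP s_gt0) i_gt0 /(allP s_gt0) j_gt0 eq_sg.
  by rewrite -(sgK i_gt0) eq_sg sgK.
pose A j := W (sg j) @^-1` B (sg j).
have sigmaA j : j \in map sg s -> sigma_of (X j) (A j).
  move=> /mapP[i /(allP s_gt0) i_gt0 ->]; rewrite /A sgK //.
  by exists (f @^-1` B i); rewrite ?setTI //; exact: measurable_preimage_f.
have := iX sgs_uniq sgs_gt0 sigmaA.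
rewrite bigcap_seq !big_map.
have eqA : {in s, forall i, A (sg i) = W i @^-1` B i}.
  by move=> i /(allP s_gt0) i_gt0; rewrite /A sgK.
rewrite (eq_big_seq _ eqA) (eq_big_seq (fun i => P (W i @^-1` B i))) //.
by move=> i /eqA ->.
Qed.

Lemma indep_upto_reindexed n : indep_upto P n setT W.
Proof.
move=> s B us sn mB; rewrite setTI probability_setT mul1e reindexed_prod //.
by apply: sub_all sn => i /andP[].
Qed.

Lemma indep_upto_reindexed_event (N : R -> T -> nat) (t : R) (n k : nat) :
  independent_families P X N -> (0 <= t)%R -> indep_upto P n [set w | N t w = k] W.
Proof.
move=> iXN t_ge0 s B us sn mB.
have s_gt0 : all (fun i => 0 < i)%N s by apply: sub_all sn => i /andP[].
rewrite setIC iXN.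
- by rewrite reindexed_prod // muleC.
- rewrite big_seq; apply: (big_ind (fun A => <<s _ >> A)).
  + exact: (@measurableT _ (g_sigma_algebraType _)).
  + by move=> ? ? ? ?; exact: (@measurableI _ (g_sigma_algebraType _)).
  + move=> i /(allP s_gt0) i_gt0; apply: sub_sigma_algebra.
    exists (sg i); first exact: sg_gt0.
    by exists (f @^-1` B i); rewrite ?setTI //; exact: measurable_preimage_f.
- by apply: sub_sigma_algebra; exists t => //; exists [set k]; rewrite ?setTI.
Qed.

Lemma eq_distr_reindexed : (forall n, (0 < n)%N -> eq_distr P (X n) (X 1%N)) ->
  eq_distr P (X 1%N) (fun w => f (X 1%N w)) ->
  forall i, (0 < i)%N -> eq_distr P (X i) (W i).
Proof.
move=> X_ident fX1 i i_gt0 A mA.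
rewrite (X_ident i i_gt0 A mA) (fX1 A mA).
by rewrite -(X_ident _ (sg_gt0 i_gt0) _ (measurable_preimage_f mA)).
Qed.
End reindexed_family.

Section mutually_independent_family.
Context {R : realType} {d : measure_display} {T : measurableType d}.
Variable P : probability T R.
Context {d' : measure_display} {S : measurableType d'}.
Variable X : nat -> T -> S.
Hypothesis iX : mutually_independent_pos P X.

Let id_gt0 i : (0 < i)%N -> (0 < id i)%N. Proof. by []. Qed.

Lemma indep_upto_mutual n : indep_upto P n setT X.
Proof.
exact: (indep_upto_reindexed iX id_gt0 (fun _ _ => erefl)
  (@measurable_id _ S setT) (n := n)).
Qed.

Lemma indep_upto_mutual_event (N : R -> T -> nat) (t : R) (n k : nat) :
  independent_families P X N -> 0 <= t -> indep_upto P n [set w | N t w = k] X.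
Proof.
move=> iXN t_ge0.
exact: (indep_upto_reindexed_event iX id_gt0 (fun _ _ => erefl)
  (@measurable_id _ S setT) (n := n) k iXN t_ge0).
Qed.
End mutually_independent_family.

Lemma eq_distr_compound_poisson_reindexed {R : realType} {d : measure_display}
    {T : measurableType d} (P : probability T R) {d' : measure_display}
    {S : measurableType d'} (mul : S -> S -> S) (e : S)
    (X : nat -> T -> S) (N : R -> T -> nat) (t : R)
    (sg : nat -> nat -> nat) (f : S -> S) :
  measurable_fun setT (fun p : S * S => mul p.1 p.2) ->
  (forall n, (0 < n)%N -> measurable_fun setT (X n)) ->
  mutually_independent_pos P X ->
  (forall n, (0 < n)%N -> eq_distr P (X n) (X 1%N)) ->
  independent_families P X N -> 0 <= t -> measurable_fun setT (N t) ->
  (forall n i, (0 < i)%N -> (0 < sg n i)%N) ->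
  (forall n i, (0 < i)%N -> sg n (sg n i) = i) ->
  measurable_fun setT f -> eq_distr P (X 1%N) (fun w => f (X 1%N w)) ->
  eq_distr P (compound_poisson mul e X N t)
    (fun w => cprod mul e (fun i w' => f (X (sg (N t w) i) w')) (N t w) w).
Proof.
move=> mul_meas mX iX X_ident iXN t_ge0 mNt sg_gt0 sgK mf fX1.
rewrite /compound_poisson.
refine (eq_distr_cprod_random_index (P := P) mNt e mul_meas
    (U := fun=> X) (V := fun n i w => f (X (sg n i) w)) _ _ _ _ _ _ _) => n.
- exact: mX.
- exact: (measurable_reindexed mX (sg_gt0 n) mf).
- by move=> k; exact: indep_upto_mutual.
- by move=> k; exact: (indep_upto_reindexed iX (sg_gt0 n) (sgK n) mf).
- exact: indep_upto_mutual_event.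
- exact: (indep_upto_reindexed_event iX (sg_gt0 n) (sgK n) mf _ iXN t_ge0).
- exact (eq_distr_reindexed (sg_gt0 n) mf X_ident fX1).
Qed.

(* Fixing the indices outside 1..n keeps the reindexed factors a sequence over
   all positive integers. *)
Definition rev_index (n i : nat) : nat := if (0 < i <= n)%N then (n.+1 - i)%N else i.

Lemma rev_index_gt0 n i : (0 < i)%N -> (0 < rev_index n i)%N.
Proof. by rewrite /rev_index; case: ifP => // /andP[_ le_in]; rewrite subn_gt0. Qed.

Lemma rev_indexK n i : (0 < i)%N -> rev_index n (rev_index n i) = i.
Proof.
move=> i_gt0; rewrite /rev_index.
have [/andP[_ le_in]|out] := boolP (0 < i <= n)%N; last by rewrite (negbTE out).
have -> : (0 < n.+1 - i <= n)%N by apply/andP; split; lia.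
lia.
Qed.

Section left_group.
Variables (G : Type) (mul : G -> G -> G) (inv : G -> G) (e : G).
Hypothesis mulA : forall x y z, mul x (mul y z) = mul (mul x y) z.
Hypothesis mul1g : forall x, mul e x = x.
Hypothesis mulVg : forall x, mul (inv x) x = e.

Let mulgV x : mul x (inv x) = e.
Proof.
rewrite -[LHS]mul1g -{1}(mulVg (inv x)) -mulA (mulA (inv x)) mulVg mul1g.
exact: mulVg.
Qed.

Let mulg1 x : mul x e = x.
Proof. by rewrite -(mulVg x) mulA mulgV mul1g. Qed.

Let invgK x : inv (inv x) = x.
Proof. by rewrite -[inv (inv x)]mulg1 -(mulVg x) mulA mulVg mul1g. Qed.

Let invMg x y : inv (mul x y) = mul (inv y) (inv x).
Proof.
rewrite -[RHS]mulg1 -(mulgV (mul x y)) !mulA -(mulA (inv y)) mulVg mulg1.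
by rewrite mulVg mul1g.
Qed.

Lemma inv_cprod {T : Type} (X : nat -> T -> G) n w :
  inv (cprod mul e X n w) = cprod mul e (fun i w => inv (X (rev_index n i) w)) n w.
Proof.
set W := fun i w => inv (X (rev_index n i) w).
suff split_cprod j : (j <= n)%N ->
    cprod mul e X n w = mul (cprod mul e X (n - j) w) (inv (cprod mul e W j w)).
  by rewrite (split_cprod n (leqnn n)) subnn /= mul1g invgK.
elim: j => [|j IH] le_jn; first by rewrite subn0 /= -[inv e]mul1g mulgV mulg1.
have n_j : (n - j = (n - j.+1).+1)%N by lia.
have rev_j : rev_index n j.+1 = (n - j.+1).+1.
  by rewrite /rev_index ltn0Sn le_jn /=; lia.
by rewrite (IH (ltnW le_jn)) n_j /= invMg invgK /W rev_j mulA.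
Qed.

Lemma conj_cprod {T : Type} (X : nat -> T -> G) k n w :
  mul (mul k (cprod mul e X n w)) (inv k) =
  cprod mul e (fun i w => mul (mul k (X i w)) (inv k)) n w.
Proof.
elim: n => [|n IH] /=; first by rewrite mulg1 mulgV.
rewrite -IH -!mulA; congr (mul k _); congr (mul (cprod mul e X n w) _).
by rewrite (mulA (inv k) k) mulVg mul1g.
Qed.
End left_group.

Theorem proposition4 (R : realType) (d : measure_display) (T : measurableType d)
  (P : probability T R)
  (G : ptopologicalType) (mul : G -> G -> G) (inv : G -> G) (e : G)
  (mulA : forall x y z, mul x (mul y z) = mul (mul x y) z)
  (mul1g : forall x, mul e x = x)
  (mulVg : forall x, mul (inv x) x = e)
  (G_hausdorff : hausdorff_space G)
  (G_compact : compact [set: G])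
  (G_connected : connected [set: G])
  (mul_cont : continuous (fun p : G * G => mul p.1 p.2))
  (inv_cont : continuous inv)
  (mul_meas : measurable_fun setT
       (fun p : borel_of G * borel_of G => (mul p.1 p.2 : borel_of G)))
  (inv_meas : measurable_fun setT (inv : borel_of G -> borel_of G))
  (lambda : R) (lambda_gt0 : 0 < lambda)
  (N : R -> T -> nat) (HN : poisson_process P lambda N)
  (X : nat -> T -> borel_of G)
  (X_meas : forall n, (0 < n)%N -> measurable_fun setT (X n))
  (X_indep : mutually_independent_pos P X)
  (X_ident : forall n, (0 < n)%N -> eq_distr P (X n) (X 1%N))
  (XN_indep : independent_families P X N)
  (t : R) (t_ge0 : 0 <= t) :
  let Y : T -> borel_of G := compound_poisson mul e X N t in
  (eq_distr P (X 1%N) (fun w => (inv (X 1%N w) : borel_of G)) ->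
     eq_distr P Y (fun w => (inv (Y w) : borel_of G))) /\
  (forall k : G,
     eq_distr P (X 1%N) (fun w => (mul (mul k (X 1%N w)) (inv k) : borel_of G)) ->
     eq_distr P Y (fun w => (mul (mul k (Y w)) (inv k) : borel_of G))).
Proof.
move=> Y; have [mN _ _ _ _] := HN.
have mNt := mN t t_ge0.
split=> [inv_X1 | k conj_X1].
- have -> : (fun w => inv (Y w) : borel_of G) = fun w =>
      cprod mul e (fun i w' => inv (X (rev_index (N t w) i) w')) (N t w) w.
    by apply/funext => w; exact: inv_cprod.
  exact (eq_distr_compound_poisson_reindexed (e : borel_of G) mul_meas X_meas
    X_indep X_ident XN_indep t_ge0 mNt (fun n => @rev_index_gt0 n)
    (fun n => @rev_indexK n) inv_meas inv_X1).
- have conj_meas : measurable_fun setT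
      (fun x : borel_of G => (mul (mul k x) (inv k) : borel_of G)).
    have cst (x : G) : measurable_fun setT (fun _ : borel_of G => (x : borel_of G)).
      exact: measurable_cst.
    have mul_k : measurable_fun setT (fun x : borel_of G => (mul k x : borel_of G)).
      exact: (measurableT_comp mul_meas
        (measurable_fun_pair (cst k) (@measurable_id _ (borel_of G) setT))).
    exact: (measurableT_comp mul_meas (measurable_fun_pair mul_k (cst (inv k)))).
  have -> : (fun w => mul (mul k (Y w)) (inv k) : borel_of G) = fun w =>
      cprod mul e (fun i w' => mul (mul k (X i w')) (inv k)) (N t w) w.
    by apply/funext => w; exact: conj_cprod.
  exact (eq_distr_compound_poisson_reindexed (e : borel_of G) mul_meas X_meas
    X_indep X_ident XN_indep t_ge0 mNt (sg := fun _ i => i) (fun _ _ => id)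
    (fun _ _ _ => erefl) conj_meas conj_X1).
Qed.
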